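(* Let $f(z)=\sum_{n=0}^\infty a_n z^n$ and $g(z)=\sum_{n=0}^\infty b_n z^n$ be analytic in $\mathbb{D}$ with $f\prec g$. Then for all $0\le r\le 1/3$, $$\sum_{n=0}^\infty |a_n|r^n+\left(\frac{1}{1+|a_0|}+\frac{r}{1-r}\right)\sum_{n=1}^{\infty}|a_n|^2r^{2n}\le \sum_{n=0}^\infty |b_n|r^n+\left(\frac{1}{1+|a_0|}+\frac{r}{1-r}\right)\sum_{n=1}^{\infty}|b_n|^2r^{2n}.$$
   Context: $\mathbb{D}$ is the open unit disk. $f\prec g$ (subordination) means there is an analytic $\omega:\mathbb{D}\to\mathbb{D}$ with $\omega(0)=0$ and $f=g\circ\omega$ on $\mathbb{D}$. *)

From Stdlib Require Import Reals.
From Coquelicot Require Import Coquelicot.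
Open Scope R_scope.

Definition analytic_disk_series (f : Complex.C -> Complex.C) (a : nat -> Complex.C) : Prop :=
  forall z : Complex.C, Cmod z < 1 ->
    is_series (fun n : nat => Cmult (a n) (Cpow z n)) (f z).

Definition analytic_disk (f : Complex.C -> Complex.C) : Prop :=
  exists a : nat -> Complex.C, analytic_disk_series f a.

Definition subordinate (f g : Complex.C -> Complex.C) : Prop :=
  exists w : Complex.C -> Complex.C,
    analytic_disk w /\
    (forall z : Complex.C, Cmod z < 1 -> Cmod (w z) < 1) /\
    w (RtoC 0) = RtoC 0 /\
    (forall z : Complex.C, Cmod z < 1 -> f z = g (w z)).

From Stdlib Require Import Reals Lra Lia Psatz.
From Coquelicot Require Import Coquelicot.
Open Scope R_scope.

(* Write the Schwarz function of the subordination as W(z) = sum c_n z^n.  Bohr's inequality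
   for Schwarz functions, sum |c_n| r^n <= r for r <= 1/3, follows from the Wiener-type bounds
   |c_n| <= 1 - |c_1|^2 (n >= 2), which come from Parseval's identity applied to W(z)(x + y z^n).
   Hence the coefficients of the partial compositions sum_{k <= K} b_k W^k have majorant series
   dominated by sum_{k <= K} |b_k| r^k, while Littlewood's subordination principle, again via
   Parseval on circles (discretised at roots of unity) and |W(z)| <= |z|, dominates their quadratic
   means by sum_{k <= K} |b_k|^2 r^(2k).  Letting K grow gives the two comparisons
   sum |a_n| r^n <= sum |b_n| r^n and sum |a_n|^2 r^(2n) <= sum |b_n|^2 r^(2n), and a_0 = b_0. *)

(** * Finite sums and series of complex numbers *)

Fixpoint csum (f : nat -> C) (n : nat) : C :=
  match n with O => f O | S k => (csum f k + f (S k))%C end.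

Lemma csum_sum_n f n : csum f n = sum_n f n.
Proof.
induction n; simpl; [now rewrite sum_O|]. now rewrite sum_Sn, IHn.
Qed.

Lemma Re_csum f n : Re (csum f n) = sum_f_R0 (fun k => Re (f k)) n.
Proof. induction n; simpl; auto. unfold Re in *; simpl. now rewrite IHn. Qed.

Lemma Im_csum f n : Im (csum f n) = sum_f_R0 (fun k => Im (f k)) n.
Proof. induction n; simpl; auto. unfold Im in *; simpl. now rewrite IHn. Qed.

Lemma csum_ext f g n : (forall k, (k <= n)%nat -> f k = g k) -> csum f n = csum g n.
Proof.
induction n; intros H; simpl; [apply H; lia|].
rewrite IHn by (intros; apply H; lia). rewrite H; auto.
Qed.

Lemma csum_const (x : C) M : csum (fun _ => x) M = (INR (S M) * x)%C.
Proof.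
induction M; simpl csum; [simpl; ring|]. rewrite IHM, (S_INR (S M)), RtoC_plus. ring.
Qed.

Lemma csum_zero (a : nat -> C) N : (forall m, (m <= N)%nat -> a m = 0%C) -> csum a N = 0%C.
Proof. intros H. rewrite (csum_ext _ (fun _ => 0%C)) by auto. rewrite csum_const. ring. Qed.

Lemma csum_plus f g M : csum (fun k => f k + g k)%C M = (csum f M + csum g M)%C.
Proof. induction M; simpl; auto. rewrite IHM. ring. Qed.

Lemma csum_mult_l a f M : (a * csum f M)%C = csum (fun k => a * f k)%C M.
Proof. induction M; simpl; auto. rewrite <- IHM. ring. Qed.

Lemma csum_mult_r a f M : (csum f M * a)%C = csum (fun k => f k * a)%C M.
Proof. induction M; simpl; auto. rewrite <- IHM. ring. Qed.

Lemma csum_conj f M : Cconj (csum f M) = csum (fun k => Cconj (f k)) M.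
Proof. induction M; simpl; auto. now rewrite Cplus_conj, IHM. Qed.

Lemma RtoC_sum f M : RtoC (sum_f_R0 f M) = csum (fun k => RtoC (f k)) M.
Proof. induction M; simpl; auto. now rewrite RtoC_plus, IHM. Qed.

Lemma csum_shift (f : nat -> C) K : csum f (S K) = (f 0%nat + csum (fun k => f (S k)) K)%C.
Proof. induction K; [simpl; ring|]. simpl csum in *. rewrite IHK. ring. Qed.

Lemma csum_switch (u : nat -> nat -> C) m n :
  csum (fun i => csum (u i) n) m = csum (fun j => csum (fun i => u i j) m) n.
Proof.
rewrite !csum_sum_n, (sum_n_ext _ (fun i => sum_n (u i) n)) by (intros; apply csum_sum_n).
rewrite sum_n_switch. apply sum_n_ext. intros; symmetry; apply csum_sum_n.
Qed.

Lemma csum_delta (x : nat -> C) n M : (n <= M)%nat ->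
  csum (fun m => if Nat.eqb n m then x m else 0%C) M = x n.
Proof.
induction M; intros H.
- simpl. now replace n with 0%nat by lia.
- simpl csum. destruct (Nat.eqb_spec n (S M)) as [->|h].
  + rewrite csum_zero; [ring|]. intros k Hk. destruct (Nat.eqb_spec (S M) k); [lia|auto].
  + rewrite IHM by lia. ring.
Qed.

Lemma csum_triangle f K : Cmod (csum f K) <= sum_f_R0 (fun k => Cmod (f k)) K.
Proof.
induction K; simpl; [lra|]. eapply Rle_trans; [apply Cmod_triangle|lra].
Qed.

Lemma csum_tail_le f M K : (M <= K)%nat ->
  Cmod (csum f K - csum f M)%C
  <= sum_f_R0 (fun k => Cmod (f k)) K - sum_f_R0 (fun k => Cmod (f k)) M.
Proof.
induction 1.
- replace (csum f M - csum f M)%C with (RtoC 0) by ring. rewrite Cmod_0. lra.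
- simpl. replace (csum f m + f (S m) - csum f M)%C with ((csum f m - csum f M) + f (S m))%C
    by ring.
  eapply Rle_trans; [apply Cmod_triangle|lra].
Qed.

Lemma Cmod_le_Rabs_Re_Im (z : C) : Cmod z <= Rabs (Re z) + Rabs (Im z).
Proof.
destruct z as [x y]. unfold Cmod, Re, Im; simpl fst; simpl snd.
pose proof (Rabs_pos x); pose proof (Rabs_pos y).
rewrite <- (sqrt_Rsqr (Rabs x + Rabs y)) by lra.
apply sqrt_le_1_alt. unfold Rsqr.
rewrite <- (pow2_abs x), <- (pow2_abs y). nra.
Qed.

Lemma Rabs_Im_le_Cmod (z : C) : Rabs (Im z) <= Cmod z.
Proof.
pose proof (re_le_Cmod (z * Ci)%C) as H. rewrite Cmod_mult, Cmod_Ci, Rmult_1_r in H.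
replace (Re (z * Ci)%C) with (- Im z) in H by (destruct z; unfold Re, Im; simpl; ring).
now rewrite Rabs_Ropp in H.
Qed.

Lemma Cmod_triangle_rev (x y : C) : Rabs (Cmod x - Cmod y) <= Cmod (x - y)%C.
Proof.
apply Rabs_le. split.
- pose proof (Cmod_triangle (y - x)%C x) as H. replace (y - x + x)%C with y in H by ring.
  replace (y - x)%C with (- (x - y))%C in H by ring. rewrite Cmod_opp in H. lra.
- pose proof (Cmod_triangle (x - y)%C y) as H. replace (x - y + y)%C with x in H by ring. lra.
Qed.

Lemma is_series_C_Re_Im (a : nat -> C) (l : C) :
  is_series (fun n => Re (a n)) (Re l) -> is_series (fun n => Im (a n)) (Im l) ->
  is_series (V := C_NormedModule) a l.
Proof.
unfold is_series. intros H1 H2. apply filterlim_locally. intros eps.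
destruct (proj1 (filterlim_locally _ _) H1 eps) as [N1 HN1].
destruct (proj1 (filterlim_locally _ _) H2 eps) as [N2 HN2].
exists (max N1 N2). intros n Hn. split.
- change (ball (Re l) eps (Re (sum_n a n))).
  rewrite <- csum_sum_n, Re_csum, <- sum_n_Reals. apply HN1. lia.
- change (ball (Im l) eps (Im (sum_n a n))).
  rewrite <- csum_sum_n, Im_csum, <- sum_n_Reals. apply HN2. lia.
Qed.

Lemma is_series_Re (a : nat -> C) (l : C) :
  is_series (V := C_NormedModule) a l -> is_series (fun n => Re (a n)) (Re l).
Proof.
unfold is_series. intros H. apply filterlim_locally. intros eps.
destruct (proj1 (filterlim_locally _ _) H eps) as [N HN]. exists N. intros n Hn.
destruct (HN n Hn) as [H1 _]. change (ball (Re l) eps (Re (sum_n a n))) in H1.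
now rewrite <- csum_sum_n, Re_csum, <- sum_n_Reals in H1.
Qed.

Lemma is_series_Im (a : nat -> C) (l : C) :
  is_series (V := C_NormedModule) a l -> is_series (fun n => Im (a n)) (Im l).
Proof.
unfold is_series. intros H. apply filterlim_locally. intros eps.
destruct (proj1 (filterlim_locally _ _) H eps) as [N HN]. exists N. intros n Hn.
destruct (HN n Hn) as [_ H1]. change (ball (Im l) eps (Im (sum_n a n))) in H1.
now rewrite <- csum_sum_n, Im_csum, <- sum_n_Reals in H1.
Qed.

Lemma is_series_C_plus (a b : nat -> C) (la lb : C) :
  is_series (V := C_NormedModule) a la -> is_series (V := C_NormedModule) b lb ->
  is_series (V := C_NormedModule) (fun n => a n + b n)%C (la + lb)%C.
Proof. apply (is_series_plus (V := C_NormedModule)). Qed.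

Lemma is_series_C_minus (a b : nat -> C) (la lb : C) :
  is_series (V := C_NormedModule) a la -> is_series (V := C_NormedModule) b lb ->
  is_series (V := C_NormedModule) (fun n => a n - b n)%C (la - lb)%C.
Proof. apply (is_series_minus (V := C_NormedModule)). Qed.

Lemma is_series_C_scal (x : C) (a : nat -> C) (la : C) :
  is_series (V := C_NormedModule) a la ->
  is_series (V := C_NormedModule) (fun n => x * a n)%C (x * la)%C.
Proof. apply (is_series_scal (V := C_NormedModule)). Qed.

Lemma is_series_dist_le (a : nat -> C) (l x : C) (B : R) (M : nat) :
  is_series (V := C_NormedModule) a l ->
  (forall K, (M <= K)%nat -> Cmod (csum a K - x)%C <= B) -> Cmod (l - x)%C <= B.
Proof.
intros H HB. destruct (Rle_or_lt (Cmod (l - x)%C) B) as [h|h]; [exact h|exfalso].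
set (e := (Cmod (l - x)%C - B) / 2).
assert (He : 0 < e) by (unfold e; lra).
destruct (proj1 (filterlim_locally _ _) H (mkposreal e He)) as [N HN].
specialize (HN (max M N) ltac:(lia)). specialize (HB (max M N) ltac:(lia)).
rewrite csum_sum_n in HB. set (s := sum_n a (max M N)) in *.
destruct HN as [H1 H2].
change (Rabs (fst s - fst l) < e) in H1. change (Rabs (snd s - snd l) < e) in H2.
assert (T : Cmod (l - x)%C <= Cmod (l - s)%C + Cmod (s - x)%C).
{ replace (l - x)%C with ((l - s) + (s - x))%C by ring. apply Cmod_triangle. }
pose proof (Cmod_le_Rabs_Re_Im (l - s)%C).
replace (Re (l - s)%C) with (- (fst s - fst l)) in * by (unfold Re; simpl; ring).
replace (Im (l - s)%C) with (- (snd s - snd l)) in * by (unfold Im; simpl; ring).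
rewrite !Rabs_Ropp in *. unfold e in *. lra.
Qed.

(** * Real series *)

Lemma sum_le_Series (a : nat -> R) M :
  (forall n, 0 <= a n) -> ex_series a -> sum_f_R0 a M <= Series a.
Proof.
intros Hp Hex. rewrite <- sum_n_Reals.
apply (is_lim_seq_incr_compare (sum_n a)); [now apply Series_correct|].
intros n. rewrite sum_Sn. specialize (Hp (S n)). unfold plus; simpl. lra.
Qed.

Lemma term_le_Series (a : nat -> R) n : (forall k, 0 <= a k) -> ex_series a -> a n <= Series a.
Proof.
intros Hp Hex. eapply Rle_trans; [|apply (sum_le_Series a n Hp Hex)].
destruct n; simpl; [lra|]. pose proof (cond_pos_sum a n Hp). lra.
Qed.

Lemma Series_le_of_sum_le (a : nat -> R) B :
  ex_series a -> (forall M, sum_f_R0 a M <= B) -> Series a <= B.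
Proof.
intros Hex HB. assert (H := is_lim_seq_le (sum_n a) (fun _ => B) (Series a) B).
simpl in H. apply H.
- intros n. rewrite sum_n_Reals. apply HB.
- now apply Series_correct.
- apply is_lim_seq_const.
Qed.

Lemma is_lim_seq_sum_f_R0 (a : nat -> R) : ex_series a -> is_lim_seq (sum_f_R0 a) (Series a).
Proof.
intros H. apply Series_correct in H.
apply is_lim_seq_ext with (sum_n a); [intros; apply sum_n_Reals|exact H].
Qed.

Lemma le_of_le_plus_vanishing (X Y : R) (D : nat -> R) :
  (forall K, X <= Y + D K) -> is_lim_seq D 0 -> X <= Y.
Proof.
intros H HD. rewrite <- (Rplus_0_r Y).
assert (L := is_lim_seq_le (fun _ => X) (fun K => Y + D K) X (Y + 0)). simpl in L.
apply L; [exact H|apply is_lim_seq_const|].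
apply (is_lim_seq_plus' _ _ Y 0); [apply is_lim_seq_const|exact HD].
Qed.

Definition Series_tail (u : nat -> R) (K : nat) : R := Series u - sum_f_R0 u K.

Lemma Series_tail_ge_0 (u : nat -> R) K :
  (forall n, 0 <= u n) -> ex_series u -> 0 <= Series_tail u K.
Proof. intros Hp Hex. unfold Series_tail. pose proof (sum_le_Series u K Hp Hex). lra. Qed.

Lemma is_lim_seq_Series_tail (u : nat -> R) : ex_series u -> is_lim_seq (Series_tail u) 0.
Proof.
intros Hex. replace 0 with (Series u - Series u) by ring.
apply is_lim_seq_minus'; [apply is_lim_seq_const|now apply is_lim_seq_sum_f_R0].
Qed.

Lemma ex_series_sq (x : nat -> R) :
  (forall k, 0 <= x k) -> ex_series x -> ex_series (fun n => x n ^ 2).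
Proof.
intros Hp Hex.
apply (@ex_series_le R_AbsRing R_CompleteNormedModule _ (fun n => Series x * x n)).
- intros n. change (norm (x n ^ 2)) with (Rabs (x n ^ 2)).
  rewrite Rabs_right by (apply Rle_ge, pow2_ge_0).
  pose proof (term_le_Series x n Hp Hex). specialize (Hp n). simpl. nra.
- exact (ex_series_scal_l (Series x) x Hex).
Qed.

Lemma term_le_sum (f : nat -> R) k N : (forall m, 0 <= f m) -> (k <= N)%nat -> f k <= sum_f_R0 f N.
Proof.
intros Hp H. induction H.
- destruct k; simpl; [lra|]. pose proof (cond_pos_sum f k Hp). lra.
- simpl. specialize (Hp (S m)). lra.
Qed.

Lemma two_terms_le_Series (a : nat -> R) i j : (i < j)%nat -> (forall k, 0 <= a k) -> ex_series a ->
  a i + a j <= Series a.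
Proof.
intros Hij Hp Hex. eapply Rle_trans; [|apply (sum_le_Series a j Hp Hex)].
destruct j as [|j]; [lia|]. simpl. pose proof (term_le_sum a i j Hp ltac:(lia)). lra.
Qed.

Lemma sum_diff_le (f g : nat -> R) K K' : (K <= K')%nat -> (forall k, f k <= g k) ->
  sum_f_R0 f K' - sum_f_R0 f K <= sum_f_R0 g K' - sum_f_R0 g K.
Proof. intros H Hfg. induction H; [lra|]. simpl. specialize (Hfg (S m)). lra. Qed.

Lemma sum_f_R0_switch (u : nat -> nat -> R) m n :
  sum_f_R0 (fun i => sum_f_R0 (u i) n) m = sum_f_R0 (fun j => sum_f_R0 (fun i => u i j) m) n.
Proof.
rewrite <- !sum_n_Reals, (sum_n_ext _ (fun i => sum_n (u i) n))
  by (intros; now rewrite sum_n_Reals).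
rewrite sum_n_switch. apply sum_n_ext. intros; now rewrite sum_n_Reals.
Qed.

Lemma is_series_finite {K : AbsRing} {V : NormedModule K} (a : nat -> V) M :
  (forall m, (M < m)%nat -> a m = zero) -> is_series a (sum_n a M).
Proof.
intros H. apply filterlim_locally. intros eps. exists M. intros N HN.
replace (sum_n a N) with (sum_n a M); [apply ball_center|].
induction HN; auto. rewrite sum_Sn, H, plus_zero_r by lia. auto.
Qed.

Lemma is_series_finite_C (a : nat -> C) M :
  (forall m, (M < m)%nat -> a m = 0%C) -> is_series (V := C_NormedModule) a (csum a M).
Proof. rewrite csum_sum_n. apply (is_series_finite (V := C_NormedModule)). Qed.

Lemma is_series_single k (v : R) : is_series (fun m => if Nat.eqb m k then v else 0) v.
Proof.
set (e := fun m => if Nat.eqb m k then v else 0).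
assert (Hs : is_series e (sum_n e k)).
{ apply (@is_series_finite R_AbsRing R_NormedModule).
  intros m Hm. unfold e. destruct (Nat.eqb_spec m k); [lia|auto]. }
replace (sum_n e k) with v in Hs; [exact Hs|].
rewrite sum_n_Reals. unfold e. destruct k; simpl; auto.
rewrite Nat.eqb_refl, (sum_eq _ (fun _ => 0)), sum_cte; [ring|].
intros m Hm. destruct (Nat.eqb_spec m (S k)); [lia|auto].
Qed.

Lemma is_series_single_C k (v : C) :
  is_series (V := C_NormedModule) (fun m => if Nat.eqb m k then v else RtoC 0) v.
Proof.
set (e := fun m => if Nat.eqb m k then v else RtoC 0).
assert (Hs : is_series (V := C_NormedModule) e (csum e k)).
{ apply is_series_finite_C. intros m Hm. unfold e. destruct (Nat.eqb_spec m k); [lia|auto]. }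
replace (csum e k) with v in Hs; [exact Hs|].
unfold e. rewrite (csum_ext _ (fun m => if Nat.eqb k m then v else RtoC 0)), csum_delta; auto.
intros m _. now rewrite Nat.eqb_sym.
Qed.

Lemma Bernoulli_le (t : R) (m : nat) : 0 <= t <= 1 -> 1 - INR m * t <= (1 - t) ^ m.
Proof.
intros Ht. induction m; [simpl; lra|]. rewrite S_INR; simpl.
assert ((1 - t) * (1 - INR m * t) <= (1 - t) * (1 - t) ^ m) by (apply Rmult_le_compat_l; lra).
pose proof (pos_INR m). nra.
Qed.

Lemma pow_le_1 (x : R) (k : nat) : 0 <= x <= 1 -> x ^ k <= 1.
Proof. intros H. induction k; simpl; [lra|]. pose proof (pow_le x k). nra. Qed.

Lemma le_of_forall_mul_pow_le (X Y : R) (m : nat) : 0 <= X -> 0 <= Y ->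
  (forall rho, 0 <= rho < 1 -> X * rho ^ m <= Y) -> X <= Y.
Proof.
intros HX HY H. destruct (Rle_or_lt X Y) as [h|h]; auto. exfalso.
pose proof (pos_INR m) as Hm.
assert (HXm : 0 <= X * INR m) by (apply Rmult_le_pos; lra).
set (D := 2 * (X * (INR m + 1) + 1)).
assert (HD : 0 < D) by (unfold D; nra).
set (t := (X - Y) / D).
assert (Ht0 : 0 < t) by (unfold t; apply Rdiv_lt_0_compat; lra).
assert (HtD : t * D = X - Y) by (unfold t; field; lra).
assert (Ht1 : t <= 1 / 2).
{ apply (Rmult_le_reg_r D); [lra|]. rewrite HtD. unfold D. lra. }
assert (Hlt : X * INR m * t < t * D) by (unfold D; nra).
specialize (H (1 - t) ltac:(lra)).
assert (X * (1 - INR m * t) <= X * (1 - t) ^ m)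
  by (apply Rmult_le_compat_l; [lra|apply Bernoulli_le; lra]).
lra.
Qed.

(** * Power series on the unit disk *)

Lemma Cmod_RtoC_pow (t : R) n : 0 <= t -> Cmod (RtoC t ^ n)%C = t ^ n.
Proof. intros. now rewrite Cmod_pow, Cmod_R, Rabs_right by lra. Qed.

Lemma Cmod_mult_pow_nonneg (e : nat -> C) (s : R) n : 0 <= s -> 0 <= Cmod (e n) * s ^ n.
Proof. intros. apply Rmult_le_pos; [apply Cmod_ge_0|now apply pow_le]. Qed.

Section DiskSeries.

Variables (F : C -> C) (e : nat -> C).
Hypothesis HF : analytic_disk_series F e.

(* The terms at t = (1 + s) / 2 tend to 0, so the series at s is dominated by a geometric one. *)
Lemma ex_series_Cmod_coef s : 0 <= s < 1 -> ex_series (fun n => Cmod (e n) * s ^ n).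
Proof.
intros Hs. set (t := (1 + s) / 2).
assert (Ht : 0 < t < 1) by (unfold t; lra).
assert (Hz : Cmod (RtoC t) < 1) by (rewrite Cmod_R, Rabs_right; lra).
specialize (HF _ Hz).
assert (L1 := ex_series_lim_0 _ (ex_intro _ _ (is_series_Re _ _ HF))).
assert (L2 := ex_series_lim_0 _ (ex_intro _ _ (is_series_Im _ _ HF))).
apply is_lim_seq_spec in L1, L2.
assert (Hh : 0 < 1 / 2) by lra.
destruct (L1 (mkposreal _ Hh)) as [N1 H1]. destruct (L2 (mkposreal _ Hh)) as [N2 H2].
set (N := max N1 N2). apply (ex_series_incr_n _ N).
apply (@ex_series_le R_AbsRing R_CompleteNormedModule _ (fun k => (s / t) ^ (N + k))).
- intros k. set (m := (N + k)%nat).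
  specialize (H1 m ltac:(unfold m, N; lia)). specialize (H2 m ltac:(unfold m, N; lia)).
  change (Rabs (Re (e m * RtoC t ^ m)%C - 0) < 1 / 2) in H1.
  change (Rabs (Im (e m * RtoC t ^ m)%C - 0) < 1 / 2) in H2.
  rewrite Rminus_0_r in H1, H2.
  pose proof (Cmod_le_Rabs_Re_Im (e m * RtoC t ^ m)%C) as H3.
  rewrite Cmod_mult, Cmod_RtoC_pow in H3 by lra.
  change (norm (Cmod (e m) * s ^ m)) with (Rabs (Cmod (e m) * s ^ m)).
  rewrite Rabs_right by (apply Rle_ge, Cmod_mult_pow_nonneg; lra).
  unfold Rdiv. rewrite Rpow_mult_distr, pow_inv.
  assert (0 < t ^ m) by (apply pow_lt; lra).
  pose proof (pow_le s m ltac:(lra)). pose proof (Cmod_ge_0 (e m)).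
  apply (Rmult_le_reg_r (t ^ m)); auto.
  replace (s ^ m * / t ^ m * t ^ m) with (s ^ m) by (field; lra). nra.
- apply (ex_series_incr_n (fun k => (s / t) ^ k) N). apply ex_series_geom.
  rewrite Rabs_right by (apply Rle_ge, Rdiv_le_0_compat; lra).
  apply (Rmult_lt_reg_r t); [lra|]. unfold Rdiv. rewrite Rmult_assoc, Rinv_l by lra.
  unfold t. lra.
Qed.

Lemma ex_series_Cmod_coef_sq r : 0 <= r < 1 -> ex_series (fun n => (Cmod (e n) * r ^ n) ^ 2).
Proof.
intros Hr. apply ex_series_sq; [intros; apply Cmod_mult_pow_nonneg; lra|].
now apply ex_series_Cmod_coef.
Qed.

Lemma coef_sq_le_Series r k : 0 <= r < 1 ->
  (Cmod (e k) * r ^ k) ^ 2 <= Series (fun n => (Cmod (e n) * r ^ n) ^ 2).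
Proof.
intros Hr. apply (term_le_Series (fun n => (Cmod (e n) * r ^ n) ^ 2)).
- intros n. apply pow2_ge_0.
- now apply ex_series_Cmod_coef_sq.
Qed.

Lemma Cmod_sub_partial_le_Series_tail w s K : Cmod w <= s < 1 ->
  Cmod (F w - csum (fun k => e k * w ^ k)%C K)%C <= Series_tail (fun k => Cmod (e k) * s ^ k) K.
Proof.
intros Hw. pose proof (Cmod_ge_0 w).
apply (is_series_dist_le _ _ _ _ K (HF w ltac:(lra))). intros K' HK'.
eapply Rle_trans; [now apply csum_tail_le|]. cbv beta.
rewrite !(sum_eq (fun k => Cmod (e k * w ^ k)%C) (fun k => Cmod (e k) * Cmod w ^ k))
  by (intros; now rewrite Cmod_mult, Cmod_pow).
eapply Rle_trans; [apply (sum_diff_le _ (fun k => Cmod (e k) * s ^ k)); auto|].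
- intros k. apply Rmult_le_compat_l; [apply Cmod_ge_0|apply pow_incr; lra].
- unfold Series_tail. pose proof (sum_le_Series (fun k => Cmod (e k) * s ^ k) K').
  assert (sum_f_R0 (fun k => Cmod (e k) * s ^ k) K' <= Series (fun k => Cmod (e k) * s ^ k))
    by (apply sum_le_Series; [intros; apply Cmod_mult_pow_nonneg|apply ex_series_Cmod_coef]; lra).
  lra.
Qed.

Lemma analytic_disk_series_0 : e 0%nat = F 0%C.
Proof.
assert (Hpartial : forall K, csum (fun n => e n * 0 ^ n)%C K = e 0%nat).
{ induction K; simpl csum; [|rewrite IHK]; simpl; ring. }
assert (H : Cmod (F 0%C - e 0%nat)%C <= 0).
{ assert (H0 : Cmod 0%C < 1) by (rewrite Cmod_0; lra).
  apply (is_series_dist_le _ _ _ _ 0 (HF _ H0)).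
  intros K _. rewrite Hpartial. replace (e 0%nat - e 0%nat)%C with (RtoC 0) by ring.
  rewrite Cmod_0. lra. }
pose proof (Cmod_ge_0 (F 0%C - e 0%nat)%C).
symmetry. apply Ceq_minus, Cmod_eq_0. lra.
Qed.

End DiskSeries.

Definition cauchy_prod (p q : nat -> C) (n : nat) : C := csum (fun i => p i * q (n - i)%nat)%C n.

Lemma cauchy_prod_mult_pow (p q : nat -> C) z n :
  (cauchy_prod p q n * z ^ n)%C
  = csum (fun i => (p i * z ^ i) * (q (n - i)%nat * z ^ (n - i)))%C n.
Proof.
unfold cauchy_prod. rewrite csum_mult_r. apply csum_ext. intros i Hi.
replace (z ^ n)%C with (z ^ i * z ^ (n - i))%C; [ring|].
rewrite <- Cpow_add_r. f_equal. lia.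
Qed.

Lemma ex_series_Rabs_Re_Im (a : nat -> C) (b : nat -> R) :
  ex_series b -> (forall n, Cmod (a n) <= b n) ->
  ex_series (fun n => Rabs (Re (a n))) /\ ex_series (fun n => Rabs (Im (a n))).
Proof.
intros Hb H. split; apply (@ex_series_le R_AbsRing R_CompleteNormedModule _ b); auto;
  intros n; change norm with Rabs; simpl; rewrite Rabs_Rabsolu;
  eapply Rle_trans; [apply re_le_Cmod| |apply Rabs_Im_le_Cmod|]; auto.
Qed.

Lemma is_series_cauchy_prod (p q : nat -> C) (P Q z : C) :
  is_series (V := C_NormedModule) (fun n => p n * z ^ n)%C P ->
  is_series (V := C_NormedModule) (fun n => q n * z ^ n)%C Q ->
  ex_series (fun n => Cmod (p n) * Cmod z ^ n) -> ex_series (fun n => Cmod (q n) * Cmod z ^ n) ->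
  is_series (V := C_NormedModule) (fun n => cauchy_prod p q n * z ^ n)%C (P * Q)%C.
Proof.
intros HP HQ AP AQ.
set (pa := fun n => (p n * z ^ n)%C). set (qa := fun n => (q n * z ^ n)%C).
assert (BP : forall n, Cmod (pa n) <= Cmod (p n) * Cmod z ^ n)
  by (intros; unfold pa; rewrite Cmod_mult, Cmod_pow; lra).
assert (BQ : forall n, Cmod (qa n) <= Cmod (q n) * Cmod z ^ n)
  by (intros; unfold qa; rewrite Cmod_mult, Cmod_pow; lra).
destruct (ex_series_Rabs_Re_Im pa _ AP BP) as [PR PI].
destruct (ex_series_Rabs_Re_Im qa _ AQ BQ) as [QR QI].
pose proof (is_series_Re _ _ HP) as HPR. pose proof (is_series_Im _ _ HP) as HPI.
pose proof (is_series_Re _ _ HQ) as HQR. pose proof (is_series_Im _ _ HQ) as HQI.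
fold pa in HPR, HPI. fold qa in HQR, HQI.
apply is_series_C_Re_Im.
- eapply is_series_ext;
    [|apply (is_series_minus _ _ _ _ (is_series_mult _ _ _ _ HPR HQR PR QR)
                                    (is_series_mult _ _ _ _ HPI HQI PI QI))].
  intros n. cbv beta. change (plus ?x (opp ?y)) with (x - y).
  rewrite cauchy_prod_mult_pow, Re_csum, <- minus_sum.
  apply sum_eq. intros i _. fold (pa i) (qa (n - i)%nat). unfold Re; simpl. ring.
- eapply is_series_ext;
    [|apply (is_series_plus _ _ _ _ (is_series_mult _ _ _ _ HPR HQI PR QI)
                                   (is_series_mult _ _ _ _ HPI HQR PI QR))].
  intros n. cbv beta. change (plus ?x ?y) with (x + y).
  rewrite cauchy_prod_mult_pow, Im_csum, <- plus_sum.
  apply sum_eq. intros i _. fold (pa i) (qa (n - i)%nat). unfold Im; simpl. ring.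
Qed.

Lemma analytic_disk_series_mult (F G : C -> C) (p q : nat -> C) :
  analytic_disk_series F p -> analytic_disk_series G q ->
  analytic_disk_series (fun z => F z * G z)%C (cauchy_prod p q).
Proof.
intros HF HG z Hz. apply is_series_cauchy_prod; auto.
- apply (ex_series_Cmod_coef F); auto. split; [apply Cmod_ge_0|auto].
- apply (ex_series_Cmod_coef G); auto. split; [apply Cmod_ge_0|auto].
Qed.

Lemma Series_Cmod_cauchy_prod_le (p q : nat -> C) (s : R) : 0 <= s ->
  ex_series (fun n => Cmod (p n) * s ^ n) -> ex_series (fun n => Cmod (q n) * s ^ n) ->
  Series (fun n => Cmod (cauchy_prod p q n) * s ^ n)
  <= Series (fun n => Cmod (p n) * s ^ n) * Series (fun n => Cmod (q n) * s ^ n).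
Proof.
intros Hs Ep Eq.
set (a := fun n => Cmod (p n) * s ^ n). set (b := fun n => Cmod (q n) * s ^ n).
pose proof (is_series_mult_pos a b _ _ (Series_correct _ Ep) (Series_correct _ Eq)
  (fun n => Cmod_mult_pow_nonneg p s n Hs) (fun n => Cmod_mult_pow_nonneg q s n Hs)) as M.
assert (Hle : forall n, 0 <= Cmod (cauchy_prod p q n) * s ^ n
                        <= sum_f_R0 (fun k => a k * b (n - k)%nat) n).
{ intros n. split; [now apply Cmod_mult_pow_nonneg|].
  unfold cauchy_prod. eapply Rle_trans.
  { apply Rmult_le_compat_r; [now apply pow_le|apply csum_triangle]. }
  rewrite Rmult_comm, scal_sum. apply sum_Rle. intros i Hi. unfold a, b.
  rewrite Cmod_mult. replace (s ^ n) with (s ^ i * s ^ (n - i)); [apply Req_le; ring|].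
  rewrite <- pow_add. f_equal. lia. }
apply (Rle_trans _ (Series (fun n => sum_f_R0 (fun k => a k * b (n - k)%nat) n))).
- apply Series_le; [exact Hle|eexists; exact M].
- rewrite (is_series_unique _ _ M). apply Rle_refl.
Qed.

Lemma is_series_shift (c : nat -> C) (z L : C) n :
  is_series (V := C_NormedModule) (fun m => c m * z ^ m)%C L ->
  is_series (V := C_NormedModule)
    (fun m => if Nat.leb n m then c (m - n)%nat * z ^ m else RtoC 0)%C (z ^ n * L)%C.
Proof.
intros H. destruct n as [|n].
- simpl. rewrite Cmult_1_l. eapply is_series_ext; [|exact H].
  intros m. simpl. now rewrite Nat.sub_0_r.
- apply (is_series_decr_n _ (S n)); [lia|].
  rewrite <- csum_sum_n, csum_zero by (intros m Hm; destruct (Nat.leb_spec (S n) m); [lia|auto]).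
  match goal with |- is_series _ ?v => replace v with (z ^ S n * L)%C end.
  2:{ change (plus ?x (opp ?y)) with (x - y)%C. ring. }
  eapply is_series_ext; [|apply (is_series_C_scal (z ^ S n)%C _ _ H)].
  intros k. cbv beta. destruct (Nat.leb_spec (S n) (S n + k)); [|lia].
  replace (S n + k - S n)%nat with k by lia. rewrite Cpow_add_r. simpl. ring.
Qed.

Definition monomial_pair (x0 x1 : C) (n m : nat) : C :=
  ((if Nat.eqb m 0 then x0 else 0) + (if Nat.eqb m n then x1 else 0))%C.

Lemma analytic_disk_series_monomial_pair x0 x1 n : (1 <= n)%nat ->
  analytic_disk_series (fun z => x0 + x1 * z ^ n)%C (monomial_pair x0 x1 n).
Proof.
intros Hn z _.
replace (x0 + x1 * z ^ n)%C with (csum (fun m => monomial_pair x0 x1 n m * z ^ m)%C n).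
- apply is_series_finite_C. intros m Hm. unfold monomial_pair.
  destruct (Nat.eqb_spec m 0), (Nat.eqb_spec m n); try lia. simpl. ring.
- rewrite (csum_ext _ (fun m => (if Nat.eqb 0 m then x0 * z ^ m else 0)
                              + (if Nat.eqb n m then x1 * z ^ m else 0))%C).
  + rewrite csum_plus, (csum_delta (fun m => x0 * z ^ m)%C), (csum_delta (fun m => x1 * z ^ m)%C)
      by lia.
    simpl. ring.
  + intros m _. unfold monomial_pair. rewrite (Nat.eqb_sym 0 m), (Nat.eqb_sym n m).
    destruct (Nat.eqb m 0), (Nat.eqb m n); ring.
Qed.

Lemma Series_monomial_pair_sq x0 x1 n rho : (1 <= n)%nat ->
  Series (fun m => (Cmod (monomial_pair x0 x1 n m) * rho ^ m) ^ 2)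
  = Cmod x0 ^ 2 + (Cmod x1 * rho ^ n) ^ 2.
Proof.
intros Hn. apply is_series_unique.
eapply is_series_ext;
  [|apply (is_series_plus _ _ _ _ (is_series_single 0 (Cmod x0 ^ 2))
                                  (is_series_single n ((Cmod x1 * rho ^ n) ^ 2)))].
intros m. change (plus ?x ?y) with (x + y). unfold monomial_pair.
destruct (Nat.eqb_spec m 0) as [->|h0]; [|destruct (Nat.eqb_spec m n) as [->|h1]].
- destruct (Nat.eqb_spec 0 n); [lia|]. rewrite Cplus_0_r. simpl. ring.
- rewrite Cplus_0_l. simpl. ring.
- rewrite Cplus_0_l, Cmod_0. simpl. ring.
Qed.

(** * Parseval's identity on circles *)

Definition root_unity (N : nat) : C := (cos (2 * PI / INR N), sin (2 * PI / INR N)).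

Lemma root_unity_pow N k :
  (root_unity N ^ k)%C = (cos (2 * PI * INR k / INR N), sin (2 * PI * INR k / INR N)).
Proof.
induction k.
- simpl. unfold Rdiv. now rewrite !Rmult_0_r, !Rmult_0_l, cos_0, sin_0.
- rewrite Cpow_S, IHk. unfold root_unity, Cmult; simpl fst; simpl snd.
  replace (2 * PI * INR (S k) / INR N) with (2 * PI / INR N + 2 * PI * INR k / INR N)
    by (rewrite S_INR; unfold Rdiv; ring).
  rewrite cos_plus, sin_plus. f_equal; ring.
Qed.

Lemma Cmod_root_unity_pow N k : Cmod (root_unity N ^ k)%C = 1.
Proof.
rewrite root_unity_pow. unfold Cmod; simpl fst; simpl snd. rewrite <- sqrt_1. f_equal.
pose proof (sin2_cos2 (2 * PI * INR k / INR N)). unfold Rsqr in H. simpl. lra.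
Qed.

Lemma root_unity_pow_neq_0 N k : (root_unity N ^ k)%C <> RtoC 0.
Proof. intros h. pose proof (Cmod_root_unity_pow N k). rewrite h, Cmod_0 in H. lra. Qed.

Lemma root_unity_pow_N N : (0 < N)%nat -> (root_unity N ^ N)%C = 1.
Proof.
intros H. rewrite root_unity_pow.
replace (2 * PI * INR N / INR N) with (2 * PI) by (field; apply not_0_INR; lia).
now rewrite cos_2PI, sin_2PI.
Qed.

Lemma root_unity_pow_neq_1 N k : (0 < k < N)%nat -> (root_unity N ^ k)%C <> 1.
Proof.
intros H E. rewrite root_unity_pow in E.
set (x := 2 * PI * INR k / INR N) in E.
assert (Hk : 0 < INR k) by (apply lt_0_INR; lia).
assert (HN : INR k < INR N) by (apply lt_INR; lia).
pose proof PI_RGT_0.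
assert (Hx1 : 0 < x) by (unfold x; apply Rdiv_lt_0_compat; nra).
assert (Hx2 : x < 2 * PI).
{ unfold x. apply (Rmult_lt_reg_r (INR N)); [lra|].
  unfold Rdiv. rewrite Rmult_assoc, Rinv_l by lra. nra. }
assert (Hs : sin x = 0) by exact (f_equal snd E).
assert (Hc : cos x = 1) by exact (f_equal fst E).
destruct (sin_eq_O_2PI_0 x ltac:(lra) ltac:(lra) Hs) as [h|[h|h]]; try lra.
rewrite h, cos_PI in Hc. lra.
Qed.

Lemma root_unity_pow_inj N n m : (n < N)%nat -> (m < N)%nat ->
  (root_unity N ^ n)%C = (root_unity N ^ m)%C -> n = m.
Proof.
set (w := root_unity N).
assert (Hlt : forall n m, (n < m < N)%nat -> (w ^ n)%C <> (w ^ m)%C).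
{ intros p q H E. apply (root_unity_pow_neq_1 N (q - p)); [lia|]. fold w.
  pose proof (root_unity_pow_neq_0 N p) as Hp. fold w in Hp.
  replace (w ^ (q - p))%C with (/ w ^ p * (w ^ p * w ^ (q - p)))%C by (field; auto).
  rewrite <- Cpow_add_r, Nat.add_comm, Nat.sub_add, <- E by lia. field; auto. }
intros Hn Hm E. destruct (Nat.lt_total n m) as [h|[h|h]]; auto; exfalso.
- exact (Hlt n m ltac:(lia) E).
- exact (Hlt m n ltac:(lia) (eq_sym E)).
Qed.

Lemma Cgeom_sum_eq_0 (q : C) M : (q ^ S M)%C = 1 -> q <> 1 -> csum (fun j => q ^ j)%C M = 0%C.
Proof.
intros H1 H2.
assert (T : ((1 - q) * csum (fun j => q ^ j) M)%C = (1 - q ^ S M)%C).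
{ clear. induction M; simpl; [ring|]. rewrite Cmult_plus_distr_l, IHM. simpl. ring. }
rewrite H1 in T.
assert (Hq : (1 - q)%C <> RtoC 0) by (intro h; apply H2; now apply Ceq_minus in h).
replace (csum (fun j => q ^ j)%C M) with (/ (1 - q) * ((1 - q) * csum (fun j => q ^ j)%C M))%C
  by (field; auto).
rewrite T. ring.
Qed.

Lemma root_unity_orthogonality N n m : (n < N)%nat -> (m < N)%nat ->
  csum (fun j => (root_unity N ^ j) ^ n * Cconj ((root_unity N ^ j) ^ m))%C (pred N) =
  if Nat.eqb n m then RtoC (INR N) else 0%C.
Proof.
intros Hn Hm. set (w := root_unity N).
rewrite (csum_ext _ (fun j => (w ^ n * Cconj (w ^ m)) ^ j)%C).
2:{ intros j _. rewrite Cpow_mult_l, <- !Cpow_mult_r, !Cpow_conj, <- !Cpow_mult_r.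
    now rewrite (Nat.mul_comm j n), (Nat.mul_comm j m). }
assert (Hu : forall k, (w ^ k * Cconj (w ^ k))%C = 1).
{ intros k. rewrite <- Cmod2_conj. unfold w. rewrite Cmod_root_unity_pow. simpl. f_equal; ring. }
destruct (Nat.eqb_spec n m) as [<-|Hnm].
- rewrite Hu, (csum_ext _ (fun _ => 1%C)) by (intros; apply Cpow_1_l).
  rewrite csum_const. replace (S (pred N)) with N by lia. ring.
- apply Cgeom_sum_eq_0.
  + replace (S (pred N)) with N by lia.
    rewrite Cpow_mult_l, <- Cpow_conj, <- !Cpow_mult_r, (Nat.mul_comm n N), (Nat.mul_comm m N),
      !Cpow_mult_r.
    unfold w. rewrite root_unity_pow_N, !Cpow_1_l by lia.
    apply injective_projections; simpl; ring.
  + intro Hq.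
    assert (Heq : (w ^ n)%C = (w ^ m)%C).
    { replace (w ^ n)%C with ((w ^ n * Cconj (w ^ m)) * w ^ m)%C; [rewrite Hq; ring|].
      rewrite <- Cmult_assoc, (Cmult_comm (Cconj _)), Hu. ring. }
    exact (Hnm (root_unity_pow_inj N n m Hn Hm Heq)).
Qed.

Lemma discrete_parseval (u : nat -> C) M :
  sum_f_R0 (fun j => Cmod (csum (fun n => u n * (root_unity (S M) ^ j) ^ n)%C M) ^ 2) M
  = INR (S M) * sum_f_R0 (fun n => Cmod (u n) ^ 2) M.
Proof.
set (w := fun j => (root_unity (S M) ^ j)%C).
apply (f_equal fst) with (x := RtoC _) (y := RtoC _).
rewrite RtoC_mult, !RtoC_sum.
rewrite (csum_ext _ (fun j => csum (fun n => csum (fun m =>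
   (u n * Cconj (u m)) * ((w j) ^ n * Cconj ((w j) ^ m))) M) M)%C).
2:{ intros j _. rewrite Cmod2_conj, csum_conj, csum_mult_r. apply csum_ext. intros n _.
    rewrite csum_mult_l. apply csum_ext. intros m _. rewrite Cmult_conj. fold (w j). ring. }
rewrite csum_switch.
rewrite (csum_ext _ (fun n => csum (fun m => (u n * Cconj (u m)) *
    csum (fun j => (w j) ^ n * Cconj ((w j) ^ m)) M) M)%C).
2:{ intros n _. rewrite csum_switch. apply csum_ext. intros m _. now rewrite csum_mult_l. }
rewrite (csum_ext _ (fun n => csum (fun m =>
    if Nat.eqb n m then (u n * Cconj (u m)) * INR (S M) else 0) M)%C).
2:{ intros n Hn. apply csum_ext. intros m Hm. unfold w.
    pose proof (root_unity_orthogonality (S M) n m ltac:(lia) ltac:(lia)) as O.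
    simpl pred in O. rewrite O. destruct (Nat.eqb n m); ring. }
rewrite csum_mult_l. apply csum_ext. intros n Hn.
rewrite (csum_delta (fun m => (u n * Cconj (u m)) * INR (S M))%C) by lia.
rewrite Cmod2_conj. ring.
Qed.

Definition circle_mean_sq (H : C -> C) (M : nat) : R :=
  / INR (S M) * sum_f_R0 (fun j => Cmod (H (root_unity (S M) ^ j)%C) ^ 2) M.

Section CircleMean.

Variables (e : nat -> C) (r : R) (H : C -> C).
Hypothesis Hr : 0 <= r.
Hypothesis Hex : ex_series (fun n => Cmod (e n) * r ^ n).
Hypothesis HH : forall z, Cmod z = 1 ->
  is_series (V := C_NormedModule) (fun n => e n * (RtoC r * z) ^ n)%C (H z).

Let partial M z := csum (fun n => e n * (RtoC r * z) ^ n)%C M.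

Let sum_Cmod_circle z K : Cmod z = 1 ->
  sum_f_R0 (fun k => Cmod (e k * (RtoC r * z) ^ k)%C) K = sum_f_R0 (fun k => Cmod (e k) * r ^ k) K.
Proof.
intros Hz. apply sum_eq. intros k _.
now rewrite Cmod_mult, Cmod_pow, Cmod_mult, Hz, Cmod_R, Rabs_right, Rmult_1_r by lra.
Qed.

Let sum_le_Series_abs K :
  sum_f_R0 (fun k => Cmod (e k) * r ^ k) K <= Series (fun k => Cmod (e k) * r ^ k).
Proof. apply sum_le_Series; auto. intros; now apply Cmod_mult_pow_nonneg. Qed.

Let Cmod_partial_le M z : Cmod z = 1 -> Cmod (partial M z) <= Series (fun k => Cmod (e k) * r ^ k).
Proof.
intros Hz. eapply Rle_trans; [apply csum_triangle|]. cbv beta. rewrite sum_Cmod_circle; auto.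
Qed.

Let Cmod_sub_partial_le M z : Cmod z = 1 ->
  Cmod (H z - partial M z)%C <= Series_tail (fun k => Cmod (e k) * r ^ k) M.
Proof.
intros Hz. apply (is_series_dist_le _ _ _ _ M (HH z Hz)). intros K HK.
eapply Rle_trans; [now apply csum_tail_le|]. cbv beta. rewrite !sum_Cmod_circle by auto.
pose proof (sum_le_Series_abs K). unfold Series_tail. lra.
Qed.

Let Cmod_le_Series z : Cmod z = 1 -> Cmod (H z) <= Series (fun k => Cmod (e k) * r ^ k).
Proof.
intros Hz. replace (H z) with (H z - 0)%C by ring.
apply (is_series_dist_le _ _ _ _ 0 (HH z Hz)). intros K _.
replace (csum _ K - 0)%C with (partial K z) by (unfold partial; ring). auto.
Qed.

Let circle_mean_sq_partial M :
  circle_mean_sq (partial M) M = sum_f_R0 (fun n => (Cmod (e n) * r ^ n) ^ 2) M.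
Proof.
unfold circle_mean_sq, partial.
rewrite (sum_eq _ (fun j => Cmod (csum (fun n => (e n * RtoC r ^ n) * (root_unity (S M) ^ j) ^ n)
  M)%C ^ 2)), discrete_parseval.
- pose proof (lt_0_INR (S M) ltac:(lia)). rewrite <- Rmult_assoc, Rinv_l, Rmult_1_l by lra.
  apply sum_eq. intros n _. now rewrite Cmod_mult, Cmod_RtoC_pow.
- intros j _. do 2 f_equal. apply csum_ext. intros n _. rewrite Cpow_mult_l. ring.
Qed.

Let circle_mean_sq_dist M :
  Rabs (circle_mean_sq H M - sum_f_R0 (fun n => (Cmod (e n) * r ^ n) ^ 2) M)
  <= 2 * Series (fun k => Cmod (e k) * r ^ k) * Series_tail (fun k => Cmod (e k) * r ^ k) M.
Proof.
set (A := Series _). set (tau := Series_tail _ M).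
assert (Hpoint : forall z, Cmod z = 1 ->
  Rabs (Cmod (H z) ^ 2 - Cmod (partial M z) ^ 2) <= 2 * A * tau).
{ intros z Hz.
  pose proof (Cmod_triangle_rev (H z) (partial M z)).
  pose proof (Cmod_sub_partial_le M z Hz). pose proof (Cmod_le_Series z Hz).
  pose proof (Cmod_partial_le M z Hz).
  pose proof (Cmod_ge_0 (H z)). pose proof (Cmod_ge_0 (partial M z)).
  replace (Cmod (H z) ^ 2 - Cmod (partial M z) ^ 2)
    with ((Cmod (H z) - Cmod (partial M z)) * (Cmod (H z) + Cmod (partial M z))) by ring.
  rewrite Rabs_mult, (Rabs_right (_ + _)) by lra.
  pose proof (Rabs_pos (Cmod (H z) - Cmod (partial M z))).
  apply (Rle_trans _ (tau * (2 * A))); [apply Rmult_le_compat; unfold tau, A in *; lra|lra]. }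
rewrite <- circle_mean_sq_partial. unfold circle_mean_sq.
pose proof (lt_0_INR (S M) ltac:(lia)).
rewrite <- Rmult_minus_distr_l, Rabs_mult, Rabs_right
  by (apply Rle_ge, Rlt_le, Rinv_0_lt_compat; lra).
apply (Rmult_le_reg_l (INR (S M))); [lra|].
rewrite <- Rmult_assoc, Rinv_r, Rmult_1_l, <- minus_sum by lra.
eapply Rle_trans; [apply Rsum_abs|].
eapply Rle_trans; [apply sum_Rle; intros j _; apply Hpoint, Cmod_root_unity_pow|].
rewrite sum_cte. lra.
Qed.

Lemma is_lim_seq_circle_mean_sq :
  is_lim_seq (circle_mean_sq H) (Series (fun n => (Cmod (e n) * r ^ n) ^ 2)).
Proof.
set (A := Series (fun k => Cmod (e k) * r ^ k)).
set (S2 := Series (fun n => (Cmod (e n) * r ^ n) ^ 2)).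
set (P := sum_f_R0 (fun n => (Cmod (e n) * r ^ n) ^ 2)).
set (tau := Series_tail (fun k => Cmod (e k) * r ^ k)).
assert (LP : is_lim_seq P S2).
{ apply is_lim_seq_sum_f_R0, ex_series_sq; auto. intros; now apply Cmod_mult_pow_nonneg. }
assert (Ltau : is_lim_seq (fun M => 2 * A * tau M) 0).
{ replace (Finite 0) with (Rbar_mult (2 * A) 0) by (simpl; f_equal; ring).
  now apply is_lim_seq_scal_l, is_lim_seq_Series_tail. }
assert (L1 : is_lim_seq (fun M => P M - 2 * A * tau M) (S2 - 0)) by now apply is_lim_seq_minus'.
assert (L2 : is_lim_seq (fun M => P M + 2 * A * tau M) (S2 + 0)) by now apply is_lim_seq_plus'.
rewrite Rminus_0_r in L1. rewrite Rplus_0_r in L2.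
apply (is_lim_seq_le_le _ _ _ _ (fun M => proj1 (Rabs_le_between' _ _ _) (circle_mean_sq_dist M))
  L1 L2).
Qed.

End CircleMean.

Lemma Series_sq_le_of_Cmod_le_circle (e1 e2 : nat -> C) (H1 H2 : C -> C) (r K : R) :
  0 <= r -> 0 <= K ->
  ex_series (fun n => Cmod (e1 n) * r ^ n) -> ex_series (fun n => Cmod (e2 n) * r ^ n) ->
  (forall z, Cmod z = 1 ->
    is_series (V := C_NormedModule) (fun n => e1 n * (RtoC r * z) ^ n)%C (H1 z)) ->
  (forall z, Cmod z = 1 ->
    is_series (V := C_NormedModule) (fun n => e2 n * (RtoC r * z) ^ n)%C (H2 z)) ->
  (forall z, Cmod z = 1 -> Cmod (H1 z) <= K * Cmod (H2 z)) ->
  Series (fun n => (Cmod (e1 n) * r ^ n) ^ 2)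
  <= K ^ 2 * Series (fun n => (Cmod (e2 n) * r ^ n) ^ 2).
Proof.
intros Hr HK E1 E2 S1 S2 Hle.
pose proof (is_lim_seq_circle_mean_sq e1 r H1 Hr E1 S1) as L1.
pose proof (is_lim_seq_scal_l _ (K ^ 2) _ (is_lim_seq_circle_mean_sq e2 r H2 Hr E2 S2)) as L2.
assert (Hmean : forall M, circle_mean_sq H1 M <= K ^ 2 * circle_mean_sq H2 M).
{ intros M. unfold circle_mean_sq.
  assert (0 < / INR (S M)) by (apply Rinv_0_lt_compat, lt_0_INR; lia).
  rewrite <- Rmult_assoc, (Rmult_comm (K ^ 2)), Rmult_assoc.
  apply Rmult_le_compat_l; [lra|]. rewrite scal_sum. apply sum_Rle. intros j _.
  set (w := (root_unity (S M) ^ j)%C).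
  pose proof (Hle w (Cmod_root_unity_pow (S M) j)). pose proof (Cmod_ge_0 (H1 w)).
  rewrite <- Rpow_mult_distr, Rmult_comm. apply pow_incr. lra. }
exact (is_lim_seq_le _ _ _ _ Hmean L1 L2).
Qed.

Lemma Series_coef_sq_le_of_Cmod_le (e1 e2 : nat -> C) (F1 F2 : C -> C) (r K : R) :
  analytic_disk_series F1 e1 -> analytic_disk_series F2 e2 -> 0 <= r < 1 -> 0 <= K ->
  (forall z, Cmod z = r -> Cmod (F1 z) <= K * Cmod (F2 z)) ->
  Series (fun n => (Cmod (e1 n) * r ^ n) ^ 2)
  <= K ^ 2 * Series (fun n => (Cmod (e2 n) * r ^ n) ^ 2).
Proof.
intros P1 P2 Hr HK Hle.
assert (Hz : forall z, Cmod z = 1 -> Cmod (RtoC r * z)%C = r).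
{ intros z Hz. rewrite Cmod_mult, Hz, Cmod_R, Rabs_right by lra. ring. }
apply (Series_sq_le_of_Cmod_le_circle e1 e2 (fun z => F1 (RtoC r * z)%C)
  (fun z => F2 (RtoC r * z)%C) r K); try lra.
- now apply (ex_series_Cmod_coef F1).
- now apply (ex_series_Cmod_coef F2).
- intros z Hz1. apply P1. rewrite Hz; lra.
- intros z Hz1. apply P2. rewrite Hz; lra.
- intros z Hz1. apply Hle. auto.
Qed.

Lemma Series_coef_sq_le_of_Cmod_le_const (e : nat -> C) (F : C -> C) (r M : R) :
  analytic_disk_series F e -> 0 <= r < 1 -> 0 <= M ->
  (forall z, Cmod z = r -> Cmod (F z) <= M) ->
  Series (fun n => (Cmod (e n) * r ^ n) ^ 2) <= M ^ 2.
Proof.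
intros HF Hr HM Hle.
assert (H1 : analytic_disk_series (fun _ => RtoC 1)
               (fun n => if Nat.eqb n 0 then RtoC 1 else RtoC 0)).
{ intros z _. eapply is_series_ext; [|apply (is_series_single_C 0 (RtoC 1))].
  intros n. simpl. destruct (Nat.eqb_spec n 0) as [->|_]; simpl; ring. }
replace (M ^ 2) with (M ^ 2 * Series (fun n => (Cmod (if Nat.eqb n 0 then RtoC 1 else RtoC 0)
  * r ^ n) ^ 2)).
- apply (Series_coef_sq_le_of_Cmod_le _ _ _ _ r M HF H1 Hr HM).
  intros z Hz. rewrite Cmod_1, Rmult_1_r. auto.
- rewrite (is_series_unique _ 1); [ring|].
  eapply is_series_ext; [|apply (is_series_single 0 1)]. intros n. simpl.
  destruct (Nat.eqb_spec n 0) as [->|_]; simpl; [rewrite Cmod_1|rewrite Cmod_0]; ring.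
Qed.

(** * Schwarz functions *)

Section Schwarz.

Variables (W : C -> C) (c : nat -> C).
Hypothesis Hc : analytic_disk_series W c.
Hypothesis HW : forall z, Cmod z < 1 -> Cmod (W z) < 1.
Hypothesis Hc0 : c 0%nat = 0.

Lemma Series_coef_sq_schwarz_mult_le (G : C -> C) (p e : nat -> C) rho :
  analytic_disk_series G p -> analytic_disk_series (fun z => W z * G z)%C e -> 0 <= rho < 1 ->
  Series (fun m => (Cmod (e m) * rho ^ m) ^ 2) <= Series (fun m => (Cmod (p m) * rho ^ m) ^ 2).
Proof.
intros HG He Hrho.
rewrite <- (Rmult_1_l (Series (fun m => (Cmod (p m) * rho ^ m) ^ 2))), <- (pow1 2).
apply (Series_coef_sq_le_of_Cmod_le _ _ _ _ rho 1 He HG Hrho ltac:(lra)).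
intros z Hz. rewrite Cmod_mult. pose proof (HW z ltac:(lra)). pose proof (Cmod_ge_0 (G z)). nra.
Qed.

(* Parseval's identity for W(z) (x0 + x1 z^n) on circles of radius rho, with rho -> 1. *)
Lemma schwarz_coef_sq_le (x0 x1 : C) n : (1 <= n)%nat ->
  Cmod (x0 * c 1%nat)%C ^ 2 + Cmod (x0 * c (S n) + x1 * c 1%nat)%C ^ 2
  <= Cmod x0 ^ 2 + Cmod x1 ^ 2.
Proof.
intros Hn.
set (e := fun m => (x0 * c m + (if Nat.leb n m then x1 * c (m - n)%nat else 0))%C).
assert (He : analytic_disk_series (fun z => W z * (x0 + x1 * z ^ n))%C e).
{ intros z Hz. replace (W z * (x0 + x1 * z ^ n))%C with (x0 * W z + x1 * (z ^ n * W z))%C by ring.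
  eapply is_series_ext; [|apply is_series_C_plus; apply is_series_C_scal;
                          [apply Hc|apply is_series_shift, Hc]; auto].
  intros m. unfold e. simpl. destruct (Nat.leb n m); ring. }
assert (He1 : e 1%nat = (x0 * c 1%nat)%C).
{ unfold e. destruct (Nat.leb_spec n 1); [|ring]. replace (1 - n)%nat with 0%nat by lia.
  rewrite Hc0. ring. }
assert (HeSn : e (S n) = (x0 * c (S n) + x1 * c 1%nat)%C).
{ unfold e. destruct (Nat.leb_spec n (S n)); [|lia]. now replace (S n - n)%nat with 1%nat by lia. }
rewrite <- He1, <- HeSn.
apply (le_of_forall_mul_pow_le _ _ (2 * S n)); try (apply Rplus_le_le_0_compat; apply pow2_ge_0).
intros rho Hrho.
pose proof (Series_coef_sq_schwarz_mult_le _ _ _ rho (analytic_disk_series_monomial_pair x0 x1 n Hn)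
  He Hrho) as Hcmp.
rewrite Series_monomial_pair_sq in Hcmp by auto.
pose proof (two_terms_le_Series (fun m => (Cmod (e m) * rho ^ m) ^ 2) 1 (S n) ltac:(lia)
  (fun m => pow2_ge_0 _) (ex_series_Cmod_coef_sq _ _ He rho Hrho)) as Hlow.
cbv beta in Hlow. rewrite !Rpow_mult_distr in Hlow.
assert (Hrn : 0 <= rho ^ n <= 1) by (split; [apply pow_le|apply pow_le_1]; lra).
assert (Hr1 : rho ^ (2 * S n) <= (rho ^ 1) ^ 2).
{ replace (2 * S n)%nat with (2 + 2 * n)%nat by lia. rewrite pow_add, pow_mult.
  pose proof (pow_le_1 (rho ^ 2) n ltac:(split; [apply pow2_ge_0|simpl; nra])).
  pose proof (pow2_ge_0 rho). simpl in *. nra. }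
assert (Hr2 : rho ^ (2 * S n) = (rho ^ S n) ^ 2) by (rewrite <- pow_mult; f_equal; lia).
assert (Hx1 : (Cmod x1 * rho ^ n) ^ 2 <= Cmod x1 ^ 2).
{ rewrite Rpow_mult_distr. pose proof (pow2_ge_0 (Cmod x1)).
  assert ((rho ^ n) ^ 2 <= 1) by nra. nra. }
pose proof (pow2_ge_0 (Cmod (e 1%nat))). pose proof (pow2_ge_0 (Cmod (e (S n)))).
rewrite Rmult_plus_distr_r. nra.
Qed.

Lemma schwarz_coef_bounds :
  Cmod (c 1%nat) <= 1 /\ forall n, (1 <= n)%nat -> Cmod (c (S n)) <= 1 - Cmod (c 1%nat) ^ 2.
Proof.
set (a := Cmod (c 1%nat)). assert (Ha : 0 <= a) by apply Cmod_ge_0.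
assert (Hsq : forall n, (1 <= n)%nat -> a ^ 2 + Cmod (c (S n)) ^ 2 <= 1).
{ intros n Hn. pose proof (schwarz_coef_sq_le 1 0 n Hn) as H.
  rewrite !Cmult_1_l, Cmult_0_l, Cplus_0_r, Cmod_1, Cmod_0 in H. fold a in H. lra. }
assert (Ha1 : a <= 1)
  by (pose proof (Hsq 1%nat (le_n 1)); pose proof (pow2_ge_0 (Cmod (c 2%nat))); nra).
split; [exact Ha1|]. intros n Hn.
set (b := Cmod (c (S n))). set (d := 1 - a ^ 2).
assert (Hd : 0 <= d) by (unfold d; nra).
(* With x0 = 1 - |c1|^2 and x1 = conj(c1) c(n+1), the coefficient of index n + 1 is c(n+1). *)
pose proof (schwarz_coef_sq_le (RtoC d) (Cconj (c 1%nat) * c (S n))%C n Hn) as H.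
replace (RtoC d * c (S n) + Cconj (c 1%nat) * c (S n) * c 1%nat)%C with (c (S n)) in H.
2:{ replace (Cconj (c 1%nat) * c (S n) * c 1%nat)%C with (c (S n) * (c 1%nat * Cconj (c 1%nat)))%C
      by ring.
    rewrite <- Cmod2_conj. fold a. unfold d. rewrite RtoC_minus, RtoC_pow. ring. }
rewrite !Cmod_mult, Cmod_conj, Cmod_R, Rabs_right in H by lra. fold a b in H.
assert (Hb : 0 <= b) by apply Cmod_ge_0.
assert (Hbd : (b ^ 2 - d ^ 2) * d <= 0) by (unfold d in *; nra).
destruct (Rle_or_lt d 0) as [h|h].
- pose proof (Hsq n Hn) as Hsqn. fold b in Hsqn. unfold d in *. nra.
- assert (b ^ 2 <= d ^ 2) by (apply (Rmult_le_reg_r d); nra). nra.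
Qed.

(* Bohr's inequality for Schwarz functions: with a = |c_1|, the sum is at most
   a r + (1 - a^2) r^2 / (1 - r) <= r (a + (1 - a^2) / 2) <= r. *)
Lemma Series_Cmod_schwarz_coef_le r : 0 <= r <= 1 / 3 ->
  Series (fun n => Cmod (c n) * r ^ n) <= r.
Proof.
intros Hr. destruct schwarz_coef_bounds as [H1 H2].
set (a := Cmod (c 1%nat)) in *. set (d := 1 - a ^ 2).
assert (Ex : ex_series (fun n => Cmod (c n) * r ^ n)) by (apply (ex_series_Cmod_coef W); auto; lra).
rewrite (Series_incr_n _ 2) by (auto; lia). simpl pred. simpl sum_f_R0. rewrite Hc0, Cmod_0.
assert (Hg : Series (fun k => d * r ^ 2 * r ^ k) = d * r ^ 2 / (1 - r)).
{ rewrite Series_scal_l, Series_geom; [field; lra|]. rewrite Rabs_right; lra. }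
assert (Hle : Series (fun k => Cmod (c (2 + k)%nat) * r ^ (2 + k)) <= d * r ^ 2 / (1 - r)).
{ rewrite <- Hg. apply Series_le.
  - intros k. split; [apply Cmod_mult_pow_nonneg; lra|].
    rewrite pow_add. replace (2 + k)%nat with (S (S k)) by lia.
    specialize (H2 (S k) ltac:(lia)).
    pose proof (Rmult_le_pos _ _ (pow_le r 2 ltac:(lra)) (pow_le r k ltac:(lra))).
    rewrite Rmult_assoc. apply Rmult_le_compat_r; auto.
  - apply (ex_series_scal_l (d * r ^ 2) (fun k => r ^ k)), ex_series_geom.
    rewrite Rabs_right; lra. }
assert (Ha0 : 0 <= a) by apply Cmod_ge_0.
assert (Hd : 0 <= d) by (unfold d; nra).
assert (Hq : d * r ^ 2 / (1 - r) <= d * r / 2).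
{ replace (d * r ^ 2 / (1 - r)) with (d * r * (r / (1 - r))) by (field; lra).
  assert (r / (1 - r) <= 1 / 2) by (apply (Rmult_le_reg_r (1 - r)); [lra|]; field_simplify; lra).
  assert (0 <= r / (1 - r)) by (apply Rdiv_le_0_compat; lra).
  assert (0 <= d * r) by nra. nra. }
cbn [pow]. fold a. pose proof (Rmult_le_pos r ((1 - a) ^ 2) ltac:(lra) (pow2_ge_0 _)).
unfold d in *. nra.
Qed.

(* The Schwarz lemma on |z| <= 1/3, read off from Bohr's inequality. *)
Lemma Cmod_schwarz_le z : Cmod z <= 1 / 3 -> Cmod (W z) <= Cmod z.
Proof.
intros Hz. pose proof (Cmod_ge_0 z).
replace (W z) with (W z - 0)%C by ring.
apply (is_series_dist_le _ _ _ _ 0 (Hc z ltac:(lra))). intros K _.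
replace (csum _ K - 0)%C with (csum (fun n => c n * z ^ n)%C K) by ring.
eapply Rle_trans; [apply csum_triangle|].
rewrite (sum_eq _ (fun k => Cmod (c k) * Cmod z ^ k)) by (intros; now rewrite Cmod_mult, Cmod_pow).
eapply Rle_trans; [apply sum_le_Series|apply Series_Cmod_schwarz_coef_le; lra].
- intros; now apply Cmod_mult_pow_nonneg.
- apply (ex_series_Cmod_coef W); auto. lra.
Qed.

Fixpoint coef_pow (k : nat) : nat -> C :=
  match k with
  | O => fun n => if Nat.eqb n 0 then RtoC 1 else RtoC 0
  | S k' => cauchy_prod c (coef_pow k')
  end.

Lemma analytic_disk_series_pow k : analytic_disk_series (fun z => W z ^ k)%C (coef_pow k).
Proof.
induction k as [|k IHk].
- intros z _. eapply is_series_ext; [|apply (is_series_single_C 0 (RtoC 1))]. intros n. simpl.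
  destruct (Nat.eqb_spec n 0) as [->|_]; simpl; ring.
- apply (analytic_disk_series_mult W (fun z => W z ^ k)%C c (coef_pow k) Hc IHk).
Qed.

Lemma Series_Cmod_coef_pow_le s k : 0 <= s < 1 ->
  Series (fun n => Cmod (coef_pow k n) * s ^ n) <= Series (fun n => Cmod (c n) * s ^ n) ^ k.
Proof.
intros Hs. induction k as [|k IHk].
- simpl. apply Req_le, is_series_unique.
  eapply is_series_ext; [|apply (is_series_single 0 1)]. intros n. simpl.
  destruct (Nat.eqb_spec n 0) as [->|h]; simpl; [rewrite Cmod_1|rewrite Cmod_0]; ring.
- pose proof (ex_series_Cmod_coef _ _ Hc s Hs) as Ec.
  pose proof (ex_series_Cmod_coef _ _ (analytic_disk_series_pow k) s Hs) as Ek.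
  eapply Rle_trans; [apply (Series_Cmod_cauchy_prod_le _ _ s); auto; lra|]. simpl.
  apply Rmult_le_compat_l; auto.
  eapply Rle_trans; [|apply (term_le_Series _ 0)]; auto; intros; apply Cmod_mult_pow_nonneg; lra.
Qed.

Definition comp_coef (b : nat -> C) (K n : nat) : C := csum (fun k => b k * coef_pow k n)%C K.

Lemma analytic_disk_series_comp_coef b K :
  analytic_disk_series (fun z => csum (fun k => b k * W z ^ k) K)%C (comp_coef b K).
Proof.
induction K as [|K IHK]; intros z Hz.
- eapply is_series_ext; [|apply is_series_C_scal, analytic_disk_series_pow, Hz].
  intros n. unfold comp_coef. simpl. ring.
- eapply is_series_ext;
    [|apply is_series_C_plus; [apply IHK, Hz|apply is_series_C_scal, analytic_disk_series_pow, Hz]].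
  intros n. unfold comp_coef. simpl. ring.
Qed.

Lemma comp_coef_S b K n :
  comp_coef b (S K) n
  = (b 0%nat * coef_pow 0 n + cauchy_prod c (comp_coef (fun k => b (S k)) K) n)%C.
Proof.
unfold comp_coef. rewrite csum_shift. f_equal. symmetry. unfold cauchy_prod.
rewrite (csum_ext _ (fun i => csum (fun k => c i * (b (S k) * coef_pow k (n - i)%nat)) K)%C n)
  by (intros; apply csum_mult_l).
rewrite csum_switch. apply csum_ext. intros k _. simpl. unfold cauchy_prod.
rewrite csum_mult_l. apply csum_ext. intros i _. ring.
Qed.

Lemma sum_Cmod_comp_coef_le b K M r : 0 <= r <= 1 / 3 ->
  sum_f_R0 (fun n => Cmod (comp_coef b K n) * r ^ n) M <= sum_f_R0 (fun k => Cmod (b k) * r ^ k) K.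
Proof.
intros Hr. assert (Hs : 0 <= r < 1) by lra.
eapply Rle_trans.
{ apply sum_Rle. intros n _. apply Rmult_le_compat_r; [apply pow_le; lra|apply csum_triangle]. }
rewrite (sum_eq _ (fun n => sum_f_R0 (fun k => Cmod (coef_pow k n) * r ^ n * Cmod (b k)) K)).
2:{ intros n _. rewrite Rmult_comm, scal_sum. apply sum_eq. intros k _. rewrite Cmod_mult. ring. }
rewrite sum_f_R0_switch. apply sum_Rle. intros k _.
rewrite <- scal_sum. apply Rmult_le_compat_l; [apply Cmod_ge_0|].
eapply Rle_trans.
{ apply sum_le_Series; [intros; apply Cmod_mult_pow_nonneg; lra|].
  apply (ex_series_Cmod_coef _ _ (analytic_disk_series_pow k)); auto. }
eapply Rle_trans; [apply Series_Cmod_coef_pow_le; auto|].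
apply pow_incr. split; [|now apply Series_Cmod_schwarz_coef_le].
eapply Rle_trans; [|apply (term_le_Series _ 0)]; [apply Cmod_mult_pow_nonneg; lra| |].
- intros; apply Cmod_mult_pow_nonneg; lra.
- apply (ex_series_Cmod_coef W); auto.
Qed.

Lemma Series_cauchy_prod_schwarz_sq_le (G : C -> C) (h : nat -> C) r :
  analytic_disk_series G h -> 0 <= r <= 1 / 3 ->
  Series (fun n => (Cmod (cauchy_prod c h n) * r ^ n) ^ 2)
  <= r ^ 2 * Series (fun n => (Cmod (h n) * r ^ n) ^ 2).
Proof.
intros HG Hr.
apply (Series_coef_sq_le_of_Cmod_le _ _ _ _ r r (analytic_disk_series_mult _ _ _ _ Hc HG) HG);
  try lra.
intros z Hz. rewrite Cmod_mult. apply Rmult_le_compat_r; [apply Cmod_ge_0|].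
rewrite <- Hz. apply Cmod_schwarz_le. lra.
Qed.

(* Littlewood's subordination principle for sum_{k <= K} b_k W^k, by induction on K: removing b_0
   leaves W times a sum of the same form, and |W z| <= |z| = r on the circle. *)
Lemma Series_comp_coef_sq_le r K : 0 <= r <= 1 / 3 -> forall b,
  Series (fun n => (Cmod (comp_coef b K n) * r ^ n) ^ 2)
  <= sum_f_R0 (fun k => (Cmod (b k) * r ^ k) ^ 2) K.
Proof.
intros Hr. assert (Hr1 : 0 <= r < 1) by lra.
induction K as [|K IHK]; intros b.
- apply Req_le, is_series_unique.
  eapply is_series_ext; [|apply (is_series_single 0 ((Cmod (b 0%nat) * r ^ 0) ^ 2))].
  intros n. unfold comp_coef. simpl. destruct (Nat.eqb_spec n 0) as [->|h]; simpl.
  + now rewrite Cmult_1_r.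
  + rewrite Cmult_0_r, Cmod_0. ring.
- set (h := comp_coef (fun k => b (S k)) K).
  pose proof (analytic_disk_series_comp_coef (fun k => b (S k)) K) as Hh.
  pose proof (analytic_disk_series_mult _ _ _ _ Hc Hh) as Hch.
  pose proof (analytic_disk_series_comp_coef b (S K)) as He.
  assert (He0 : comp_coef b (S K) 0 = b 0%nat).
  { rewrite comp_coef_S. unfold cauchy_prod. simpl. rewrite Hc0. ring. }
  assert (HeS : forall n, comp_coef b (S K) (S n) = cauchy_prod c h (S n)).
  { intros n. rewrite comp_coef_S. unfold h. simpl. ring. }
  assert (Hch0 : cauchy_prod c h 0 = 0).
  { unfold cauchy_prod. simpl. rewrite Hc0. ring. }
  rewrite (Series_incr_1 _ (ex_series_Cmod_coef_sq _ _ He r Hr1)), He0.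
  rewrite (Series_ext _ _ (fun n => f_equal (fun x => (Cmod x * r ^ S n) ^ 2) (HeS n))).
  rewrite <- (Rplus_0_l (Series (fun n => (Cmod (cauchy_prod c h (S n)) * r ^ S n) ^ 2))).
  replace 0 with ((Cmod (cauchy_prod c h 0) * r ^ 0) ^ 2) by (rewrite Hch0, Cmod_0; ring).
  rewrite <- (Series_incr_1 (fun n => (Cmod (cauchy_prod c h n) * r ^ n) ^ 2))
    by exact (ex_series_Cmod_coef_sq _ _ Hch r Hr1).
  pose proof (Series_cauchy_prod_schwarz_sq_le _ _ r Hh Hr) as Hstep.
  pose proof (Rmult_le_compat_l _ _ _ (pow2_ge_0 r) (IHK (fun k => b (S k)))) as HI.
  rewrite decomp_sum by lia. simpl pred.
  rewrite (sum_eq _ (fun i => (Cmod (b (S i)) * r ^ i) ^ 2 * r ^ 2)) by (intros; simpl; ring).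
  rewrite <- scal_sum. fold h in Hstep, HI. lra.
Qed.

(** * Subordination *)

Variables (f g : C -> C) (a b : nat -> C).
Hypothesis Hf : analytic_disk_series f a.
Hypothesis Hg : analytic_disk_series g b.
Hypothesis Hfg : forall z, Cmod z < 1 -> f z = g (W z).

Let tail K := Series_tail (fun k => Cmod (b k) * (1 / 3) ^ k) K.

Let tail_ge_0 K : 0 <= tail K.
Proof.
apply Series_tail_ge_0; [intros; apply Cmod_mult_pow_nonneg; lra|].
apply (ex_series_Cmod_coef g); auto. lra.
Qed.

Let is_lim_seq_tail : is_lim_seq tail 0.
Proof. apply is_lim_seq_Series_tail, (ex_series_Cmod_coef g); auto. lra. Qed.

(* On |z| = 1/3, where |W z| <= |z|, f - sum_{k <= K} b_k W^k is g minus a partial sum at W z,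
   bounded by the tail; Parseval then bounds each coefficient by that tail. *)
Lemma Cmod_coef_sub_comp_coef_le n K : Cmod (a n - comp_coef b K n)%C * (1 / 3) ^ n <= tail K.
Proof.
set (e := fun n => (a n - comp_coef b K n)%C).
assert (He : analytic_disk_series (fun z => f z - csum (fun k => b k * W z ^ k) K)%C e).
{ intros z Hz. eapply is_series_ext;
    [|apply is_series_C_minus; [apply Hf|apply analytic_disk_series_comp_coef]; auto].
  intros m. unfold e. simpl. ring. }
assert (Hsq : Series (fun n => (Cmod (e n) * (1 / 3) ^ n) ^ 2) <= tail K ^ 2).
{ apply (Series_coef_sq_le_of_Cmod_le_const _ _ _ _ He); [lra|apply tail_ge_0|].
  intros z Hz. rewrite Hfg by lra.
  apply (Cmod_sub_partial_le_Series_tail g b Hg).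
  pose proof (Cmod_schwarz_le z ltac:(lra)). lra. }
pose proof (coef_sq_le_Series _ _ He (1 / 3) n ltac:(lra)) as Hn.
pose proof (Cmod_mult_pow_nonneg e (1 / 3) n ltac:(lra)). pose proof (tail_ge_0 K).
fold (e n). nra.
Qed.

Lemma Cmod_coef_le_comp_coef_add_tail n K r : 0 <= r <= 1 / 3 ->
  Cmod (a n) * r ^ n <= Cmod (comp_coef b K n) * r ^ n + tail K.
Proof.
intros Hr. pose proof (Cmod_coef_sub_comp_coef_le n K).
assert (Cmod (a n) <= Cmod (comp_coef b K n) + Cmod (a n - comp_coef b K n)%C).
{ replace (a n) with (comp_coef b K n + (a n - comp_coef b K n))%C at 1 by ring.
  apply Cmod_triangle. }
assert (r ^ n <= (1 / 3) ^ n) by (apply pow_incr; lra).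
pose proof (pow_le r n ltac:(lra)). pose proof (Cmod_ge_0 (a n - comp_coef b K n)%C).
nra.
Qed.

Lemma Series_Cmod_coef_le_of_subordinate r : 0 <= r <= 1 / 3 ->
  Series (fun n => Cmod (a n) * r ^ n) <= Series (fun n => Cmod (b n) * r ^ n).
Proof.
intros Hr. apply Series_le_of_sum_le; [apply (ex_series_Cmod_coef f); auto; lra|]. intros M.
apply (le_of_le_plus_vanishing _ _ (fun K => INR (S M) * tail K)).
2:{ replace (Finite 0) with (Rbar_mult (INR (S M)) 0) by (simpl; f_equal; ring).
    apply is_lim_seq_scal_l, is_lim_seq_tail. }
intros K.
eapply Rle_trans; [apply sum_Rle; intros n _; apply (Cmod_coef_le_comp_coef_add_tail n K r Hr)|].
rewrite plus_sum, sum_cte.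
pose proof (sum_Cmod_comp_coef_le b K M r Hr).
assert (sum_f_R0 (fun k => Cmod (b k) * r ^ k) K <= Series (fun n => Cmod (b n) * r ^ n))
  by (apply sum_le_Series; [intros; apply Cmod_mult_pow_nonneg|apply (ex_series_Cmod_coef g)];
      auto; lra).
lra.
Qed.

Lemma Cmod_comp_coef_le_Series n K r : 0 <= r <= 1 / 3 ->
  Cmod (comp_coef b K n) * r ^ n <= Series (fun k => Cmod (b k) * r ^ k).
Proof.
intros Hr.
eapply Rle_trans.
{ apply (term_le_sum (fun k => Cmod (comp_coef b K k) * r ^ k) n n); auto.
  intros; apply Cmod_mult_pow_nonneg; lra. }
eapply Rle_trans; [apply (sum_Cmod_comp_coef_le b K n r Hr)|].
apply sum_le_Series; [intros; apply Cmod_mult_pow_nonneg; lra|].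
apply (ex_series_Cmod_coef g); auto. lra.
Qed.

Lemma Series_coef_sq_le_of_subordinate r : 0 <= r <= 1 / 3 ->
  Series (fun n => (Cmod (a n) * r ^ n) ^ 2) <= Series (fun n => (Cmod (b n) * r ^ n) ^ 2).
Proof.
intros Hr. assert (Hr1 : 0 <= r < 1) by lra.
set (B := Series (fun n => Cmod (b n) * r ^ n)).
apply Series_le_of_sum_le; [now apply (ex_series_Cmod_coef_sq f)|]. intros M.
set (D := fun K => 2 * tail K * B + tail K * tail K).
apply (le_of_le_plus_vanishing _ _ (fun K => INR (S M) * D K)).
2:{ replace 0 with (INR (S M) * (2 * 0 * B + 0 * 0)) by ring.
    apply is_lim_seq_mult'; [apply is_lim_seq_const|].
    apply is_lim_seq_plus';
      [apply is_lim_seq_mult'; [apply is_lim_seq_mult'|]|apply is_lim_seq_mult'];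
      auto using is_lim_seq_const. }
intros K.
eapply Rle_trans.
{ apply sum_Rle. intros n _.
  pose proof (Cmod_coef_le_comp_coef_add_tail n K r Hr).
  pose proof (Cmod_comp_coef_le_Series n K r Hr). fold B in H0.
  pose proof (Cmod_mult_pow_nonneg a r n ltac:(lra)).
  pose proof (Cmod_mult_pow_nonneg (comp_coef b K) r n ltac:(lra)). pose proof (tail_ge_0 K).
  assert ((Cmod (a n) * r ^ n) ^ 2 <= (Cmod (comp_coef b K n) * r ^ n) ^ 2 + D K)
    by (unfold D; nra).
  exact H4. }
rewrite plus_sum, sum_cte.
assert (sum_f_R0 (fun n => (Cmod (comp_coef b K n) * r ^ n) ^ 2) M
        <= Series (fun n => (Cmod (b n) * r ^ n) ^ 2)).
{ eapply Rle_trans.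
  { apply sum_le_Series; [intros; apply pow2_ge_0|].
    apply (ex_series_Cmod_coef_sq _ _ (analytic_disk_series_comp_coef b K) r Hr1). }
  eapply Rle_trans; [apply (Series_comp_coef_sq_le r K Hr b)|].
  apply sum_le_Series; [intros; apply pow2_ge_0|now apply (ex_series_Cmod_coef_sq g)]. }
lra.
Qed.

End Schwarz.

Theorem lemma2 (f g : Complex.C -> Complex.C) (a b : nat -> Complex.C)
  (Hf : analytic_disk_series f a) (Hg : analytic_disk_series g b)
  (Hsub : subordinate f g) (r : R) (Hr0 : 0 <= r) (Hr1 : r <= 1 / 3) :
  Series (fun n => Cmod (a n) * r ^ n)
    + (1 / (1 + Cmod (a 0%nat)) + r / (1 - r))
      * Series (fun n => (Cmod (a (S n))) ^ 2 * r ^ (2 * S n))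
  <= Series (fun n => Cmod (b n) * r ^ n)
    + (1 / (1 + Cmod (a 0%nat)) + r / (1 - r))
      * Series (fun n => (Cmod (b (S n))) ^ 2 * r ^ (2 * S n)).
Proof.
destruct Hsub as [W [[c Hc] [HW [HW0 Hfg]]]].
assert (Hc0 : c 0%nat = 0) by (rewrite (analytic_disk_series_0 W c Hc); exact HW0).
assert (Hab : a 0%nat = b 0%nat).
{ rewrite (analytic_disk_series_0 f a Hf), (analytic_disk_series_0 g b Hg), Hfg, HW0; auto.
  rewrite Cmod_0. lra. }
assert (Hr : 0 <= r <= 1 / 3) by lra.
assert (Hsq : forall e : nat -> C, Series (fun n => Cmod (e (S n)) ^ 2 * r ^ (2 * S n))
                                   = Series (fun n => (Cmod (e (S n)) * r ^ S n) ^ 2)).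
{ intros e. apply Series_ext. intros n. now rewrite Rpow_mult_distr, <- pow_mult, Nat.mul_comm. }
pose proof (Series_coef_sq_le_of_subordinate W c Hc HW Hc0 f g a b Hf Hg Hfg r Hr) as Hquad.
rewrite (Series_incr_1 _ (ex_series_Cmod_coef_sq f a Hf r ltac:(lra))),
  (Series_incr_1 _ (ex_series_Cmod_coef_sq g b Hg r ltac:(lra))), Hab in Hquad.
rewrite !Hsq.
apply Rplus_le_compat;
  [exact (Series_Cmod_coef_le_of_subordinate W c Hc HW Hc0 f g a b Hf Hg Hfg r Hr)|].
apply Rmult_le_compat_l; [|lra].
pose proof (Cmod_ge_0 (a 0%nat)).
apply Rplus_le_le_0_compat; apply Rdiv_le_0_compat; lra.
Qed.
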